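(* Let $n \ge 2$ be an integer, let $\mathcal{H}$ be a separable Hilbert space, and let $X \subset \mathcal{H}$ be a subset consisting of exactly $n$ points, equipped with the metric induced from $\mathcal{H}$. Then for every $0 < \alpha < 1$ the snowflake space $X^{\alpha}$ cannot be isometrically embedded into the Euclidean space $E^{n-2}$.
   Context: $E^k$ denotes the $k$-dimensional Euclidean space. For a metric space $(X,d)$ and $0<\alpha<1$, the snowflake space $X^{\alpha}$ is the set $X$ equipped with the metric $d^{\alpha}(x,y) = d(x,y)^{\alpha}$. *)

From HB Require Import structures.
From mathcomp Require Import all_boot all_order all_algebra.
From mathcomp Require Import all_classical all_reals all_analysis.
Set Implicit Arguments. Unset Strict Implicit. Unset Printing Implicit Defensive.
Import Order.TTheory GRing.Theory Num.Theory.
Local Open Scope ring_scope.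

Definition is_inner_product (R : realType) (V : lmodType R) (ip : V -> V -> R) :=
  [/\ (forall (a : R) (x y z : V), ip (a *: x + y) z = a * ip x z + ip y z),
      (forall x y : V, ip x y = ip y x),
      (forall x : V, 0 <= ip x x) &
      (forall x : V, ip x x = 0 -> x = 0)].

Definition ip_dist (R : realType) (V : lmodType R) (ip : V -> V -> R) (x y : V) : R :=
  Num.sqrt (ip (x - y) (x - y)).

Definition ip_complete (R : realType) (V : lmodType R) (ip : V -> V -> R) :=
  forall u : nat -> V,
    (forall e : R, 0 < e -> exists N : nat, forall m k : nat,
        (N <= m)%N -> (N <= k)%N -> ip_dist ip (u m) (u k) < e) ->
    exists l : V, forall e : R, 0 < e -> exists N : nat, forall m : nat,
        (N <= m)%N -> ip_dist ip (u m) l < e.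

Definition ip_separable (R : realType) (V : lmodType R) (ip : V -> V -> R) :=
  exists D : nat -> V, forall (x : V) (e : R), 0 < e ->
    exists k : nat, ip_dist ip x (D k) < e.

Definition separable_hilbert (R : realType) (V : lmodType R) (ip : V -> V -> R) :=
  [/\ is_inner_product ip, ip_complete ip & ip_separable ip].

Definition eucl_dist (R : realType) (k : nat) (p q : 'rV[R]_k) : R :=
  Num.sqrt (\sum_(i < k) (p 0 i - q 0 i) ^+ 2).

(* If f embedded X^al in E^(n-2), the n points f(x_i) would be affinely dependent:
   sum_i c_i f(x_i) = 0 for some c <> 0 with sum_i c_i = 0.  Expanding squares then gives
   sum_(i,j) c_i c_j N_ij^al = 0, where N_ij = |x_i - x_j|^2.
   But for distinct points of an inner-product space this form is negative.  The Gaussian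
   kernels exp (- s N) are positive semidefinite (expand exp (2 s <x_i, x_j>) into Schur
   powers of a Gram matrix), and tend to the identity kernel as s -> oo, so that
   sum c_i c_j exp (- s N_ij) >= sum c_i^2 / 2 for large s.  Since t^al is a positive
   mixture of the kernels 1 - exp (- s t) and sum c_i = 0, the form is minus a positive
   mixture of these Gaussian forms, hence negative.  The mixture is discretized along a
   geometric grid s = e^(k h), which reproduces t^al up to a factor e^(h al). *)
From HB Require Import structures.
From mathcomp Require Import all_boot all_order all_algebra.
From mathcomp Require Import all_classical all_reals all_analysis.
From mathcomp Require Import ring lra zify.
Set Implicit Arguments. Unset Strict Implicit. Unset Printing Implicit Defensive.
Import Order.TTheory GRing.Theory Num.Theory numFieldNormedType.Exports.
Local Open Scope ring_scope.
Local Open Scope classical_set_scope.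

Definition quad_form (R : pzRingType) n (c : 'I_n -> R) (K : 'I_n -> 'I_n -> R) : R :=
  \sum_i \sum_j c i * c j * K i j.

Section QuadForm.
Variables (R : comPzRingType) (n : nat) (c : 'I_n -> R).

Lemma quad_formD (K L : 'I_n -> 'I_n -> R) :
  quad_form c (fun i j => K i j + L i j) = quad_form c K + quad_form c L.
Proof.
rewrite /quad_form -big_split; apply: eq_bigr => i _.
by rewrite -big_split; apply: eq_bigr => j _; rewrite mulrDr.
Qed.

Lemma quad_formZ a (K : 'I_n -> 'I_n -> R) :
  quad_form c (fun i j => a * K i j) = a * quad_form c K.
Proof.
rewrite /quad_form mulr_sumr; apply: eq_bigr => i _.
by rewrite mulr_sumr; apply: eq_bigr => j _; rewrite mulrCA.
Qed.

Lemma quad_formN (K : 'I_n -> 'I_n -> R) :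
  quad_form c (fun i j => - K i j) = - quad_form c K.
Proof.
rewrite /quad_form -sumrN; apply: eq_bigr => i _.
by rewrite -sumrN; apply: eq_bigr => j _; rewrite mulrN.
Qed.

Lemma quad_formB (K L : 'I_n -> 'I_n -> R) :
  quad_form c (fun i j => K i j - L i j) = quad_form c K - quad_form c L.
Proof. by rewrite quad_formD quad_formN. Qed.

Lemma quad_form_cst a : quad_form c (fun _ _ => a) = a * (\sum_i c i) ^+ 2.
Proof.
rewrite /quad_form expr2 mulr_suml mulr_sumr; apply: eq_bigr => i _.
by rewrite !mulr_sumr; apply: eq_bigr => j _; ring.
Qed.

Lemma quad_form_sum (I : Type) (r : seq I) (K : I -> 'I_n -> 'I_n -> R) :
  quad_form c (fun i j => \sum_(k <- r) K k i j) = \sum_(k <- r) quad_form c (K k).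
Proof.
rewrite /quad_form; under eq_bigr do under eq_bigr do rewrite mulr_sumr.
by under eq_bigr do rewrite exchange_big; rewrite exchange_big.
Qed.

Lemma quad_form_sqr_diff (u : 'I_n -> R) :
  \sum_i c i = 0 -> \sum_i c i * u i = 0 -> quad_form c (fun i j => (u i - u j) ^+ 2) = 0.
Proof.
move=> c_sum cu_sum.
transitivity (\sum_i (c i * u i ^+ 2 * \sum_j c j - 2 * (c i * u i) * \sum_j c j * u j
   + c i * \sum_j c j * u j ^+ 2)).
  apply: eq_bigr => i _; rewrite !mulr_sumr -sumrB -big_split /=.
  by apply: eq_bigr => j _; ring.
rewrite c_sum cu_sum; under eq_bigr do rewrite !mulr0 subrr add0r.
by rewrite -mulr_suml c_sum mul0r.
Qed.
End QuadForm.

Lemma quad_form_ge_abs (R : realDomainType) n (c : 'I_n -> R) (K B : 'I_n -> 'I_n -> R) :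
  (forall i j, `|K i j| <= B i j) ->
  - \sum_i \sum_j `|c i * c j| * B i j <= quad_form c K.
Proof.
move=> KB; rewrite -sumrN; apply: ler_sum => i _; rewrite -sumrN; apply: ler_sum => j _.
have : `|c i * c j * K i j| <= `|c i * c j| * B i j by rewrite normrM ler_wpM2l.
by rewrite ler_norml => /andP[].
Qed.

Lemma quad_form_gram_powers (R : realDomainType) n m (a : 'I_n -> 'I_m -> R)
    (b : 'I_n -> R) k :
  0 <= quad_form b (fun i j => (\sum_p a i p * a j p) ^+ k).
Proof.
elim: k b => [|k IHk] b; first by rewrite quad_form_cst mul1r sqr_ge0.
set G := fun i j => \sum_p a i p * a j p.
have -> : quad_form b (fun i j => G i j ^+ k.+1) =
    \sum_p quad_form (fun i => b i * a i p) (fun i j => G i j ^+ k).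
  rewrite /quad_form [RHS]exchange_big; apply: eq_bigr => i _.
  rewrite [RHS]exchange_big; apply: eq_bigr => j _.
  rewrite exprSr mulr_sumr mulr_sumr; apply: eq_bigr => p _; ring.
by apply: sumr_ge0 => p _; apply: IHk.
Qed.

Section InnerProduct.
Variables (R : realType) (V : lmodType R) (ip : V -> V -> R).
Hypothesis ip_inner : is_inner_product ip.

Lemma ipDZl a x y z : ip (a *: x + y) z = a * ip x z + ip y z.
Proof. by case: ip_inner => + _ _ _; apply. Qed.

Lemma ipC x y : ip x y = ip y x.
Proof. by case: ip_inner => _ + _ _; apply. Qed.

Lemma ipxx_ge0 x : 0 <= ip x x.
Proof. by case: ip_inner => _ _ + _; apply. Qed.

Lemma ipxx_eq0 x : ip x x = 0 -> x = 0.
Proof. by case: ip_inner => _ _ _; apply. Qed.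

Lemma ip0l z : ip 0 z = 0.
Proof. by have := ipDZl 1 0 0 z; rewrite scaler0 addr0 mul1r; lra. Qed.

Lemma ipZl a x z : ip (a *: x) z = a * ip x z.
Proof. by rewrite -[a *: x]addr0 ipDZl ip0l addr0. Qed.

Lemma ipDl x y z : ip (x + y) z = ip x z + ip y z.
Proof. by rewrite -[x]scale1r ipDZl mul1r scale1r. Qed.

Lemma ipBl x y z : ip (x - y) z = ip x z - ip y z.
Proof. by rewrite -scaleN1r ipDl ipZl mulN1r. Qed.

Lemma ipZr a x z : ip z (a *: x) = a * ip z x.
Proof. by rewrite ipC ipZl ipC. Qed.

Lemma ipBr x y z : ip z (x - y) = ip z x - ip z y.
Proof. by rewrite ipC ipBl ![ip _ z]ipC. Qed.

Lemma ip_suml (I : Type) (r : seq I) (F : I -> V) z :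
  ip (\sum_(i <- r) F i) z = \sum_(i <- r) ip (F i) z.
Proof.
elim: r => [|i r IHr]; first by rewrite !big_nil ip0l.
by rewrite !big_cons ipDl IHr.
Qed.

Lemma ipxx_gt0 x : x != 0 -> 0 < ip x x.
Proof. by move=> x0; rewrite lt0r ipxx_ge0 andbT; apply: contraNneq x0 => /ipxx_eq0 ->. Qed.

Definition orthonormal m (e : m.-tuple V) :=
  forall p q, ip (tnth e p) (tnth e q) = (p == q)%:R.

Definition in_span m (e : m.-tuple V) v :=
  exists b : m.-tuple R, v = \sum_p tnth b p *: tnth e p.

Lemma ip_orthonormal_sum m (e : m.-tuple V) (b : 'I_m -> R) q : orthonormal e ->
  ip (\sum_p b p *: tnth e p) (tnth e q) = b q.
Proof.
move=> e_on; rewrite ip_suml (bigD1 q) //= ipZl e_on eqxx mulr1 big1 ?addr0 // => p /negPf pq.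
by rewrite ipZl e_on pq mulr0.
Qed.

Lemma orthonormal_expansion m (e : m.-tuple V) v : orthonormal e -> in_span e v ->
  v = \sum_p ip v (tnth e p) *: tnth e p.
Proof.
move=> e_on [b ->]; apply: eq_bigr => p _.
by rewrite ip_orthonormal_sum.
Qed.

Lemma sum_cons_tuple m (b : m.-tuple R) (e : m.-tuple V) a u :
  \sum_(p < m.+1) tnth [tuple of a :: b] p *: tnth [tuple of u :: e] p =
  a *: u + \sum_p tnth b p *: tnth e p.
Proof. by rewrite big_ord_recl !tnth0; under eq_bigr do rewrite !tnthS. Qed.

Lemma in_span_cons m (e : m.-tuple V) u v : in_span e v -> in_span [tuple of u :: e] v.
Proof. by case=> b ->; exists [tuple of 0 :: b]; rewrite sum_cons_tuple scale0r add0r. Qed.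

Lemma orthonormal_cons m (e : m.-tuple V) u : orthonormal e -> ip u u = 1 ->
  (forall q, ip u (tnth e q) = 0) -> orthonormal [tuple of u :: e].
Proof.
move=> e_on u1 ue p q.
case: (unliftP ord0 p) => [p' ->|->]; case: (unliftP ord0 q) => [q' ->|->];
  rewrite ?tnth0 ?tnthS.
- by rewrite e_on (inj_eq lift_inj).
- by rewrite ipC ue eq_sym (negPf (neq_lift _ _)).
- by rewrite ue (negPf (neq_lift _ _)).
- by rewrite u1 eqxx.
Qed.

Lemma orthonormal_span (s : seq V) :
  exists m (e : m.-tuple V), orthonormal e /\ forall v, v \in s -> in_span e v.
Proof.
elim: s => [|z s [m [e [e_on s_span]]]]; first by exists 0%N, [tuple]; split => [[]|].
pose w := z - \sum_p ip z (tnth e p) *: tnth e p.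
have w_orth q : ip w (tnth e q) = 0 by rewrite ipBl ip_orthonormal_sum //= subrr.
have [w0|w_neq0] := eqVneq w 0.
  exists m, e; split => // v; rewrite inE => /orP[/eqP ->|/s_span //].
  exists [tuple ip z (tnth e p) | p < m].
  by under eq_bigr do rewrite tnth_mktuple; apply/eqP; rewrite -subr_eq0 -/w w0.
pose r := Num.sqrt (ip w w).
have r_gt0 : 0 < r by rewrite sqrtr_gt0 ipxx_gt0.
have rr : r * r = ip w w by rewrite -expr2 sqr_sqrtr ?ipxx_ge0.
pose u := r^-1 *: w.
exists m.+1, [tuple of u :: e]; split.
  apply: orthonormal_cons => // [|q]; last by rewrite ipZl w_orth mulr0.
  by rewrite ipZl ipZr -rr; field; rewrite gt_eqF.
move=> v; rewrite inE => /orP[/eqP ->|/s_span/in_span_cons //].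
exists [tuple of r :: [tuple ip z (tnth e p) | p < m]].
rewrite sum_cons_tuple /u scalerA mulfV ?gt_eqF // scale1r.
by under eq_bigr do rewrite tnth_mktuple; rewrite /w subrK.
Qed.

Lemma gram_coordinates n (y : 'I_n -> V) : exists m (a : 'I_n -> 'I_m -> R),
  forall i j, ip (y i) (y j) = \sum_p a i p * a j p.
Proof.
have [m [e [e_on y_span]]] := orthonormal_span (codom y).
exists m, (fun i p => ip (y i) (tnth e p)) => i j.
rewrite {1}(orthonormal_expansion e_on (y_span _ (codom_f y i))) ip_suml.
by apply: eq_bigr => p _; rewrite ipZl [ip (tnth e p) _]ipC.
Qed.

Variables (n : nat) (y : 'I_n -> V).

Lemma ip_powers_psd (b : 'I_n -> R) k :
  0 <= quad_form b (fun i j => ip (y i) (y j) ^+ k).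
Proof.
have [m [a ya]] := gram_coordinates y.
under eq_fun do under eq_fun do rewrite ya.
exact: quad_form_gram_powers.
Qed.

Lemma ip_exp_psd (b : 'I_n -> R) t : 0 <= t ->
  0 <= quad_form b (fun i j => expR (t * ip (y i) (y j))).
Proof.
move=> t_ge0.
have partial_sums : quad_form b (fun i j => series (exp_coeff (t * ip (y i) (y j))) K)
    @[K --> \oo] --> quad_form b (fun i j => expR (t * ip (y i) (y j))).
  apply: cvg_big => // [|i _]; first exact: add_continuous.
  apply: cvg_big => // [|j _]; first exact: add_continuous.
  apply: cvgMl_tmp; exact: is_cvg_series_exp_coeff.
apply: (closed_cvg _ (@closed_ge R 0) _ _ partial_sums).
apply: nearW => K /=; rewrite /series /= quad_form_sum; apply: sumr_ge0 => k _.
have -> : quad_form b (fun i j => exp_coeff (t * ip (y i) (y j)) k) =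
    t ^+ k / k`!%:R * quad_form b (fun i j => ip (y i) (y j) ^+ k).
  rewrite -quad_formZ; congr quad_form; apply/funext => i; apply/funext => j.
  by rewrite /exp_coeff /= exprMn; ring.
by rewrite mulr_ge0 ?ip_powers_psd // divr_ge0 ?exprn_ge0.
Qed.

Lemma gaussian_psd (c : 'I_n -> R) s : 0 <= s ->
  0 <= quad_form c (fun i j => expR (- (s * ip (y i - y j) (y i - y j)))).
Proof.
move=> s_ge0; pose d i := c i * expR (- (s * ip (y i) (y i))).
have -> : quad_form c (fun i j => expR (- (s * ip (y i - y j) (y i - y j)))) =
    quad_form d (fun i j => expR (2 * s * ip (y i) (y j))).
  apply: eq_bigr => i _; apply: eq_bigr => j _.
  rewrite /d ipBl !ipBr [ip (y j) (y i)]ipC.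
  have -> : - (s * (ip (y i) (y i) - ip (y i) (y j) - (ip (y i) (y j) - ip (y j) (y j)))) =
    - (s * ip (y i) (y i)) + (- (s * ip (y j) (y j)) + 2 * s * ip (y i) (y j)) by ring.
  by rewrite !expRD; ring.
by apply: ip_exp_psd; rewrite mulr_ge0.
Qed.

End InnerProduct.

Lemma cvg_series_shift (R : realType) (u : R ^nat) : cvgn (series u) ->
  series (fun k => u k.+1) @ \oo --> limn (series u) - u 0%N.
Proof.
move=> u_cvg.
have -> : series (fun k => u k.+1) = fun n => series u n.+1 - u 0%N.
  by apply/funext => n; rewrite /series /= big_nat_recl // addrAC subrr add0r.
by apply: cvgB; [rewrite (cvg_shiftS (series u)) | exact: cvg_cst].
Qed.

Section ScaleGrid.
Variables (R : realType) (al h : R).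
Hypotheses (al_gt0 : 0 < al) (al_lt1 : al < 1) (h_gt0 : 0 < h).

Definition grid_term (r t : R) :=
  expR (- (r * h * al)) * (1 - expR (- (expR (r * h) * t))).

(* [grid_fun t] = sum over k in Z of e^(-k h al) (1 - exp (- e^(k h) t)) discretizes
   the integral of (1 - e^(-s t)) s^(-al) ds/s, a constant multiple of t^al, along the
   geometric grid s = e^(k h); [grid_pos] and [grid_neg] hold the terms k >= 0 and k < 0. *)
Definition grid_pos t : R ^nat := fun k => grid_term k%:R t.
Definition grid_neg t : R ^nat := fun k => grid_term (- k.+1%:R) t.

Definition grid_fun t := limn (series (grid_pos t)) + limn (series (grid_neg t)).

Lemma grid_term_ge0 r t : 0 <= t -> 0 <= grid_term r t.
Proof.
move=> t_ge0; rewrite mulr_ge0 ?expR_ge0 // subr_ge0 expR_le1 oppr_le0.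
by rewrite mulr_ge0 ?expR_ge0.
Qed.

Lemma grid_term_le r t t' : 0 <= t -> t <= t' -> grid_term r t <= grid_term r t'.
Proof.
move=> t_ge0 tt'; rewrite ler_wpM2l ?expR_ge0 // lerD2l lerN2 ler_expR lerN2.
by rewrite ler_wpM2l ?expR_ge0.
Qed.

Lemma grid_term0 r : grid_term r 0 = 0.
Proof. by rewrite /grid_term mulr0 oppr0 expR0 subrr mulr0. Qed.

Lemma grid_termS r t : grid_term r (expR h * t) = expR (h * al) * grid_term (r + 1) t.
Proof.
rewrite /grid_term mulrA -expRD [RHS]mulrA -expRD mulrDl mul1r expRD.
by congr (expR _ * _); ring.
Qed.

Definition grid_ratio_pos := expR (- (h * al)).
Definition grid_ratio_neg := expR (- (h * (1 - al))).

Lemma grid_ratio_pos_lt1 : `|grid_ratio_pos| < 1.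
Proof. by rewrite gtr0_norm ?expR_gt0 // expR_lt1 oppr_lt0 mulr_gt0. Qed.

Lemma grid_ratio_neg_lt1 : `|grid_ratio_neg| < 1.
Proof. by rewrite gtr0_norm ?expR_gt0 // expR_lt1 oppr_lt0 mulr_gt0 // subr_gt0. Qed.

Lemma grid_pos_le_geometric t k : 0 <= t -> grid_pos t k <= geometric 1 grid_ratio_pos k.
Proof.
move=> t_ge0; rewrite /geometric /= mul1r /grid_ratio_pos -expRM_natl.
have -> : k%:R * - (h * al) = - (k%:R * h * al) by ring.
by rewrite ler_piMr ?expR_ge0 // lerBlDr lerDl expR_ge0.
Qed.

Lemma grid_neg_le_geometric t k : 0 <= t ->
  grid_neg t k <= geometric (t * grid_ratio_neg) grid_ratio_neg k.
Proof.
move=> t_ge0; rewrite /geometric /= /grid_ratio_neg -mulrA -exprS -expRM_natl.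
set s : R := - k.+1%:R.
apply: le_trans (ler_wpM2l (expR_ge0 _) (_ : _ <= expR (s * h) * t)) _.
  by have := expR_ge1Dx (- (expR (s * h) * t)); lra.
rewrite mulrA -expRD mulrC.
by have -> : - (s * h * al) + s * h = k.+1%:R * - (h * (1 - al)) by rewrite /s; ring.
Qed.

Lemma grid_pos_cvg t : 0 <= t -> cvgn (series (grid_pos t)).
Proof.
move=> t_ge0; apply: (@series_le_cvg R _ (geometric 1 grid_ratio_pos)).
- by move=> k; apply: grid_term_ge0.
- by move=> k; rewrite mulr_ge0 ?exprn_ge0 ?expR_ge0.
- by move=> k; apply: grid_pos_le_geometric.
- exact: is_cvg_geometric_series _ _ grid_ratio_pos_lt1.
Qed.

Lemma grid_neg_cvg t : 0 <= t -> cvgn (series (grid_neg t)).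
Proof.
move=> t_ge0;
  apply: (@series_le_cvg R _ (geometric (t * grid_ratio_neg) grid_ratio_neg)).
- by move=> k; apply: grid_term_ge0.
- by move=> k; rewrite !mulr_ge0 ?exprn_ge0 ?expR_ge0.
- by move=> k; apply: grid_neg_le_geometric.
- exact: is_cvg_geometric_series _ _ grid_ratio_neg_lt1.
Qed.

Lemma grid_fun_ub t : 0 <= t ->
  grid_fun t <= (1 - grid_ratio_pos)^-1 + t * grid_ratio_neg / (1 - grid_ratio_neg).
Proof.
move=> t_ge0; apply: lerD.
  rewrite -[X in _ <= X]mul1r -(cvg_lim _ (@cvg_geometric_series _ 1 _ grid_ratio_pos_lt1)) //.
  apply: lim_series_le (fun k => grid_pos_le_geometric k t_ge0); first exact: grid_pos_cvg.
  exact: is_cvg_geometric_series _ _ grid_ratio_pos_lt1.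
rewrite -(cvg_lim _ (cvg_geometric_series grid_ratio_neg_lt1)) //.
apply: lim_series_le (fun k => grid_neg_le_geometric k t_ge0); first exact: grid_neg_cvg.
exact: is_cvg_geometric_series _ _ grid_ratio_neg_lt1.
Qed.

Lemma ler_grid_fun t t' : 0 <= t -> t <= t' -> grid_fun t <= grid_fun t'.
Proof.
move=> t_ge0 tt'; have t'_ge0 := le_trans t_ge0 tt'.
apply: lerD; (apply: lim_series_le; last by move=> k; exact: grid_term_le).
- exact: grid_pos_cvg.
- exact: grid_pos_cvg.
- exact: grid_neg_cvg.
- exact: grid_neg_cvg.
Qed.

Lemma grid_fun0 : grid_fun 0 = 0.
Proof.
have series0 (u : R ^nat) : (forall k, u k = 0) -> limn (series u) = 0.
  move=> u0; rewrite (_ : series u = fun=> 0) ?lim_cst //.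
  by apply/funext => M; rewrite /series /= big1.
by rewrite /grid_fun -[0 in RHS]addr0; congr (_ + _); apply: series0 => k;
  apply: grid_term0.
Qed.

Lemma grid_fun1_gt0 : 0 < grid_fun 1.
Proof.
have term0 : 0 < grid_pos 1 0.
  by rewrite /grid_pos /grid_term !mul0r oppr0 expR0 !mul1r subr_gt0 expR_lt1 oppr_lt0.
have le_lim (u : R ^nat) M : (forall k, 0 <= u k) -> cvgn (series u) ->
    series u M <= limn (series u).
  move=> u_ge0 u_cvg; apply: nondecreasing_cvgn_le u_cvg M.
  by apply: nondecreasing_series => k _ _.
apply: (lt_le_trans term0); rewrite -[X in X <= _]addr0; apply: lerD.
  have -> : grid_pos 1 0 = series (grid_pos 1) 1 by rewrite /series /= big_nat1.
  by apply: le_lim (grid_pos_cvg ler01) => k; apply: grid_term_ge0.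
have -> : 0 = series (grid_neg 1) 0 by rewrite /series /= big_geq.
by apply: le_lim (grid_neg_cvg ler01) => k; apply: grid_term_ge0.
Qed.

Lemma grid_funS t : 0 <= t -> grid_fun (expR h * t) = expR (h * al) * grid_fun t.
Proof.
move=> t_ge0; have et_ge0 : 0 <= expR h * t by rewrite mulr_ge0 ?expR_ge0.
have posS : grid_pos (expR h * t) = expR (h * al) *: (fun k => grid_pos t k.+1).
  by apply/funext => k; rewrite /grid_pos grid_termS natr1.
have negS : (fun k => grid_neg (expR h * t) k.+1) = expR (h * al) *: grid_neg t.
  apply/funext => k; rewrite /grid_neg grid_termS /=; congr (_ * grid_term _ _).
  by rewrite -natr1 opprD addrNK.
have neg0 : grid_neg (expR h * t) 0%N = expR (h * al) * grid_pos t 0%N.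
  by rewrite /grid_neg /grid_pos grid_termS addNr.
have scaleE (a b : R) : a *: b = a * b by [].
set s := expR h * t in et_ge0 posS negS neg0 *.
set e := expR (h * al) in posS negS neg0 *.
have pos_shift := cvg_series_shift (grid_pos_cvg t_ge0).
have neg_shift := cvg_lim (@Rhausdorff R) (cvg_series_shift (grid_neg_cvg et_ge0)).
have neg_cvg := grid_neg_cvg t_ge0.
rewrite negS lim_seriesZ // scaleE in neg_shift.
have pos_lim : limn (series (grid_pos s)) = e * (limn (series (grid_pos t)) - grid_pos t 0%N).
  rewrite posS (lim_seriesZ _ (cvgP _ pos_shift)) scaleE; congr (_ * _).
  exact: cvg_lim pos_shift.
have neg_lim : limn (series (grid_neg s)) = e * (grid_pos t 0%N + limn (series (grid_neg t))).
  by rewrite mulrDr -neg0 neg_shift addrC subrK.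
rewrite /grid_fun; transitivity (e * (limn (series (grid_pos t)) - grid_pos t 0%N) +
  e * (grid_pos t 0%N + limn (series (grid_neg t)))); first by congr (_ + _).
by rewrite -mulrDr addrA subrK.
Qed.

Lemma grid_fun_expR_nat (k : nat) t : 0 <= t ->
  grid_fun (expR (k%:R * h) * t) = expR (k%:R * h * al) * grid_fun t.
Proof.
move=> t_ge0; elim: k => [|k IHk]; first by rewrite !mul0r expR0 !mul1r.
have -> : expR (k.+1%:R * h) * t = expR h * (expR (k%:R * h) * t).
  by rewrite mulrA -expRD -natr1 mulrDl mul1r addrC.
rewrite grid_funS ?mulr_ge0 ?expR_ge0 // IHk mulrA -expRD.
by congr (expR _ * _); rewrite -natr1; ring.
Qed.

Lemma grid_fun_expR_int (z : int) :
  grid_fun (expR (z%:~R * h)) = expR (z%:~R * h * al) * grid_fun 1.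
Proof.
case: z => k; first by rewrite -[expR _]mulr1 grid_fun_expR_nat.
rewrite NegzE intrN !mulNr.
have := grid_fun_expR_nat k.+1 (expR_ge0 (- (k.+1%:R * h))).
rewrite -expRD subrr expR0 => ->.
by rewrite mulrA -expRD addNr expR0 mul1r.
Qed.

Lemma grid_fun_approx t : 0 <= t ->
  `|grid_fun t - grid_fun 1 * t `^ al| <= grid_fun 1 * (expR (h * al) - 1) * t `^ al.
Proof.
move=> t_ge0; have [->|t_neq0] := eqVneq t 0.
  by rewrite grid_fun0 powR0 ?gt_eqF // !mulr0 subrr normr0.
have t_gt0 : 0 < t by rewrite lt0r t_neq0.
have [lo_le hi_gt] : (Num.floor (ln t / h))%:~R * h <= ln t /\
    ln t < h + (Num.floor (ln t / h))%:~R * h.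
  have /andP[] := floor_itv (ln t / h).
  by rewrite ler_pdivlMr // ltr_pdivrMr // intrD mulrDl mul1r addrC.
set z := Num.floor (ln t / h) in lo_le hi_gt.
set L := expR (z%:~R * h * al); set e := expR (h * al).
have F_lo : L * grid_fun 1 <= grid_fun t.
  rewrite -(grid_fun_expR_int z) ler_grid_fun ?expR_ge0 //.
  by rewrite -[X in _ <= X](lnK t_gt0) ler_expR.
have F_hi : grid_fun t <= e * (L * grid_fun 1).
  rewrite -(grid_fun_expR_int z) -grid_funS ?expR_ge0 //.
  by rewrite ler_grid_fun // -expRD -[X in X <= _](lnK t_gt0) ler_expR ltW.
have pow_lo : L <= t `^ al.
  rewrite /powR (negPf t_neq0) ler_expR.
  by have := ler_wpM2r (ltW al_gt0) lo_le; lra.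
have pow_hi : t `^ al <= e * L.
  rewrite /powR (negPf t_neq0) -expRD ler_expR.
  by have := ler_wpM2r (ltW al_gt0) (ltW hi_gt); lra.
have F1_gt0 := grid_fun1_gt0.
have e_ge1 : 1 <= e by rewrite -expR0 ler_expR mulr_ge0 // ltW.
have F1_pow_lo := ler_wpM2l (ltW F1_gt0) pow_lo.
have F1_pow_hi := ler_wpM2l (ltW F1_gt0) pow_hi.
have : 0 <= (e - 1) * (grid_fun 1 * t `^ al - grid_fun 1 * L).
  by rewrite mulr_ge0 // subr_ge0.
by rewrite ler_norml; lra.
Qed.

Lemma grid_fun1_bound : h <= 1 -> grid_fun 1 * (expR (h * al) - 1) <= expR 1 / (1 - al).
Proof.
move=> h_le1; set X := expR (h * al); set Y := expR (h * (1 - al)).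
have X_gt1 : 1 < X by rewrite /X expR_gt1 mulr_gt0.
have Y_gt1 : 1 < Y by rewrite /Y expR_gt1 mulr_gt0 // subr_gt0.
have X_le_e : X <= expR 1.
  rewrite /X ler_expR; have /= := ler_wpM2r (ltW al_gt0) h_le1.
  by rewrite mul1r => /le_trans; apply; apply: ltW.
have X_sub1 : X - 1 <= h * al * X.
  have := ler_wpM2r (ltW (lt_trans ltr01 X_gt1)) (expR_ge1Dx (- (h * al))).
  by rewrite expRN mulVf ?gt_eqF ?(lt_trans ltr01) //; lra.
have Y_sub1 : h * (1 - al) <= Y - 1 by rewrite /Y; have := expR_ge1Dx (h * (1 - al)); lra.
have F1_le := grid_fun_ub ler01.
rewrite mul1r /grid_ratio_pos /grid_ratio_neg !expRN -/X -/Y in F1_le.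
apply: (le_trans (ler_wpM2r _ F1_le)); first by rewrite subr_ge0 ltW.
have -> : ((1 - X^-1)^-1 + Y^-1 / (1 - Y^-1)) * (X - 1) = X + (X - 1) / (Y - 1).
  by field; rewrite !subr_eq0 !gt_eqF ?(lt_trans ltr01) // eq_sym gt_eqF.
have -> : expR 1 / (1 - al) = expR 1 + al / (1 - al) * expR 1.
  by field; rewrite subr_eq0 eq_sym lt_eqF.
apply: lerD => //.
have hal_gt0 : 0 < h * (1 - al) by rewrite mulr_gt0 // subr_gt0.
apply: le_trans (_ : h * al * X / (h * (1 - al)) <= _).
  apply: ler_pM => //; first by rewrite subr_ge0 ltW.
    by rewrite invr_ge0 subr_ge0 ltW.
  by rewrite lef_pV2 ?posrE ?subr_gt0.
have -> : h * al * X / (h * (1 - al)) = al / (1 - al) * X.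
  by field; rewrite subr_eq0 eq_sym lt_eqF ?gt_eqF.
by rewrite ler_wpM2l // divr_ge0 ?subr_ge0 ?ltW.
Qed.
End ScaleGrid.

Section ConditionallyNegative.
Variables (R : realType) (n : nat) (c : 'I_n -> R) (N : 'I_n -> 'I_n -> R).
Hypothesis c_sum : \sum_i c i = 0.
Hypothesis N_ge0 : forall i j, 0 <= N i j.
Hypothesis N_gt0 : forall i j, i != j -> 0 < N i j.
Hypothesis N_diag : forall i, N i i = 0.

Definition heat s := quad_form c (fun i j => expR (- (s * N i j))).

Hypothesis heat_ge0 : forall s, 0 < s -> 0 <= heat s.

Let mass := \sum_i c i ^+ 2.
Let cross_mass := \sum_i \sum_(j | j != i) `|c i * c j| / N i j.

Lemma heat_ge s : 0 < s -> mass - cross_mass / s <= heat s.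
Proof.
move=> s_gt0; rewrite /heat /quad_form /mass /cross_mass mulr_suml -sumrB.
apply: ler_sum => i _.
rewrite [X in _ <= X](bigD1 i) //= N_diag mulr0 oppr0 expR0 mulr1 -expr2.
rewrite mulr_suml -sumrN lerD2l; apply: ler_sum => j ji.
have Nij_gt0 : 0 < N i j by apply: N_gt0; rewrite eq_sym.
have exp_le : expR (- (s * N i j)) <= (s * N i j)^-1.
  rewrite expRN lef_pV2 ?posrE ?expR_gt0 ?mulr_gt0 //.
  by apply: le_trans (expR_ge1Dx _); rewrite lerDr.
apply: le_trans (_ : - (`|c i * c j| * expR (- (s * N i j))) <= _).
  by rewrite lerN2 -mulrA -invfM [N i j * s]mulrC ler_wpM2l.
by rewrite -mulNr ler_wpM2r ?expR_ge0 // lerNnormlW.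
Qed.

Lemma heat_ge_half s : 0 < s -> 2 * cross_mass <= s * mass -> mass / 2 <= heat s.
Proof.
move=> s_gt0 large; apply: le_trans (heat_ge s_gt0).
suff : cross_mass / s <= mass / 2 by lra.
by rewrite ler_pdivrMr //; lra.
Qed.

Variable al : R.
Hypotheses (al_gt0 : 0 < al) (al_lt1 : al < 1).

Lemma quad_form_grid_term h r : quad_form c (fun i j => grid_term al h r (N i j)) =
  - (expR (- (r * h * al)) * heat (expR (r * h))).
Proof.
rewrite /grid_term quad_formZ quad_formB quad_form_cst c_sum expr0n mulr0 sub0r.
by rewrite mulrN.
Qed.

Lemma quad_form_grid_series_le h M :
  quad_form c (fun i j => series (grid_pos al h (N i j)) M + series (grid_neg al h (N i j)) M)
  <= - \sum_(0 <= k < M) expR (- (k%:R * h * al)) * heat (expR (k%:R * h)).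
Proof.
rewrite quad_formD /series /= !quad_form_sum.
rewrite /grid_pos /grid_neg /=; under eq_bigr do rewrite quad_form_grid_term.
rewrite sumrN -[X in _ <= X]addr0 lerD2l sumr_le0 // => k _.
by rewrite quad_form_grid_term oppr_le0 mulr_ge0 ?expR_ge0 ?heat_ge0 ?expR_gt0.
Qed.

Lemma heat_block (m A M : nat) : (0 < m)%N -> 2 * cross_mass <= A%:R * mass ->
  (m * A.+1 <= M)%N ->
  m%:R * (expR (- A.+1%:R) * (mass / 2)) <=
  \sum_(0 <= k < M) expR (- (k%:R * m%:R^-1 * al)) * heat (expR (k%:R * m%:R^-1)).
Proof.
move=> m_gt0 A_large M_large; have m_pos : 0 < m%:R :> R by rewrite ltr0n.
set u := fun k : nat => expR (- (k%:R * m%:R^-1 * al)) * heat (expR (k%:R * m%:R^-1)).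
have u_ge0 k : 0 <= u k by rewrite mulr_ge0 ?expR_ge0 ?heat_ge0 ?expR_gt0.
have mA_le : (m * A <= m * A.+1)%N by rewrite leq_mul2l leqnSn orbT.
rewrite (big_cat_nat (leq0n (m * A)) (leq_trans mA_le M_large)) (big_cat_nat mA_le M_large) /=.
apply: le_trans (_ : \sum_(m * A <= k < m * A.+1) u k <= _); last first.
  by rewrite /u /= addrCA lerDl addr_ge0 // sumr_ge0 // => k _; apply: u_ge0.
have -> : m%:R * (expR (- A.+1%:R) * (mass / 2)) =
    \sum_(m * A <= k < m * A.+1) expR (- A.+1%:R) * (mass / 2).
  by rewrite sumr_const_nat mulnS addnK mulr_natl.
apply: ler_sum_nat => k /andP[k_ge k_lt].
have k_lo : A%:R <= k%:R / m%:R :> R by rewrite ler_pdivlMr // -natrM ler_nat mulnC.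
have k_hi : k%:R / m%:R < A.+1%:R :> R by rewrite ltr_pdivrMr // -natrM ltr_nat mulnC.
have k_ge0 : 0 <= k%:R / m%:R :> R by rewrite divr_ge0.
have mass_ge0 : 0 <= mass by apply: sumr_ge0 => i _; apply: sqr_ge0.
apply: ler_pM; rewrite ?expR_ge0 ?divr_ge0 //.
- rewrite ler_expR lerN2; apply: le_trans (ltW k_hi).
  by rewrite -[X in _ <= X]mulr1 ler_wpM2l // ltW.
- apply: heat_ge_half; first exact: expR_gt0.
  apply: le_trans A_large _; rewrite ler_wpM2r //.
  by apply: le_trans k_lo _; apply: le_trans (expR_ge1Dx _); rewrite lerDr.
Qed.

Lemma quad_form_grid_fun_le (m A : nat) : (0 < m)%N -> 2 * cross_mass <= A%:R * mass ->
  quad_form c (fun i j => grid_fun al m%:R^-1 (N i j)) <=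
  - (m%:R * (expR (- A.+1%:R) * (mass / 2))).
Proof.
move=> m_gt0 A_large; have h_gt0 : 0 < m%:R^-1 :> R by rewrite invr_gt0 ltr0n.
have partial_sums : quad_form c (fun i j => series (grid_pos al m%:R^-1 (N i j)) M +
    series (grid_neg al m%:R^-1 (N i j)) M) @[M --> \oo] -->
    quad_form c (fun i j => grid_fun al m%:R^-1 (N i j)).
  apply: cvg_big => // [|i _]; first exact: add_continuous.
  apply: cvg_big => // [|j _]; first exact: add_continuous.
  by apply: cvgMl_tmp; apply: cvgD; [apply: grid_pos_cvg | apply: grid_neg_cvg].
apply: (closed_cvg _ (@closed_le R _) _ _ partial_sums).
near=> M; apply: le_trans (quad_form_grid_series_le _ _) _; rewrite lerN2.
by apply: heat_block => //; near: M; apply: nbhs_infty_ge.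
Unshelve. all: by end_near.
Qed.

Let powR_mass := \sum_i \sum_j `|c i * c j| * N i j `^ al.

Lemma quad_form_grid_fun_approx h : 0 < h -> h <= 1 ->
  grid_fun al h 1 * quad_form c (fun i j => N i j `^ al) <=
  quad_form c (fun i j => grid_fun al h (N i j)) + expR 1 / (1 - al) * powR_mass.
Proof.
move=> h_gt0 h_le1.
have := quad_form_ge_abs c (fun i j => grid_fun_approx al_gt0 al_lt1 h_gt0 (N_ge0 i j)).
rewrite quad_formB quad_formZ.
set G := grid_fun al h 1 * (expR (h * al) - 1).
have -> : \sum_i \sum_j `|c i * c j| * (G * N i j `^ al) = G * powR_mass.
  rewrite mulr_sumr; apply: eq_bigr => i _.
  by rewrite mulr_sumr; apply: eq_bigr => j _; rewrite mulrCA.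
have : G * powR_mass <= expR 1 / (1 - al) * powR_mass.
  apply: ler_wpM2r; last exact: grid_fun1_bound.
  by apply: sumr_ge0 => i _; apply: sumr_ge0 => j _; rewrite mulr_ge0 ?powR_ge0.
lra.
Qed.

Theorem quad_form_powR_lt0 : (exists i, c i != 0) ->
  quad_form c (fun i j => N i j `^ al) < 0.
Proof.
case=> i0 ci0.
have mass_gt0 : 0 < mass.
  apply: lt_le_trans (_ : 0 < c i0 ^+ 2) _; first by rewrite exprn_even_gt0 ?ci0 ?orbT.
  by rewrite /mass (bigD1 i0) //= lerDl sumr_ge0 // => i _; apply: sqr_ge0.
(* heat stays above mass/2 from s = e^A on, and with h = 1/m the m grid points in
   [A, A + 1) outweigh the discretization error. *)
pose A := (Num.truncn (2 * cross_mass / mass)).+1.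
have A_large : 2 * cross_mass <= A%:R * mass.
  by rewrite -ler_pdivrMr // ltW // truncnS_gt.
pose D := expR (- A.+1%:R) * (mass / 2).
have D_gt0 : 0 < D by rewrite mulr_gt0 ?expR_gt0 ?divr_gt0.
pose m := (Num.truncn (expR 1 / (1 - al) * powR_mass / D)).+1.
have m_large : expR 1 / (1 - al) * powR_mass < m%:R * D.
  by rewrite -ltr_pdivrMr // truncnS_gt.
have h_gt0 : 0 < m%:R^-1 :> R by rewrite invr_gt0 ltr0n.
have h_le1 : m%:R^-1 <= 1 :> R by rewrite invf_le1 ?ler1n ?ltr0n.
have F1_gt0 := grid_fun1_gt0 al_gt0 al_lt1 h_gt0.
have approx := quad_form_grid_fun_approx h_gt0 h_le1.
have upper : quad_form c (fun i j => grid_fun al m%:R^-1 (N i j)) <= - (m%:R * D).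
  exact: quad_form_grid_fun_le.
by rewrite -(pmulr_rlt0 _ F1_gt0); lra.
Qed.

End ConditionallyNegative.

Lemma affine_dependence (F : fieldType) n d (f : 'I_n -> 'rV[F]_d) : (d.+1 < n)%N ->
  exists c : 'I_n -> F, [/\ exists i, c i != 0, \sum_i c i = 0 & \sum_i c i *: f i = 0].
Proof.
move=> d_lt_n; pose A : 'M[F]_(n, 1 + d) := row_mx (const_mx 1) (\matrix_i f i).
have : kermx A != 0.
  rewrite kermx_eq0; apply/negP => /eqP rkA.
  by move: (rank_leq_col A); rewrite rkA add1n leqNgt d_lt_n.
case/rowV0Pn => v /sub_kermxP; rewrite mul_mx_row => /eqP.
rewrite row_mx_eq0 => /andP[/eqP v_sum /eqP v_comb] v_neq0.
exists (fun i => v 0 i); split.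
- have /existsP[i vi] : [exists i, v 0 i != 0].
    rewrite -negb_forall; apply: contra v_neq0 => /forallP v0.
    by apply/eqP/rowP => i; rewrite mxE; apply/eqP/v0.
  by exists i.
- have := congr1 (fun B : 'M[F]_1 => B 0 0) v_sum; rewrite !mxE => sum_v.
  by rewrite -[RHS]sum_v; apply: eq_bigr => i _; rewrite mxE mulr1.
- by rewrite -[RHS]v_comb mulmx_sum_row; apply: eq_bigr => i _; rewrite rowK.
Qed.

Lemma eucl_dist_sqr (R : realType) k (p q : 'rV[R]_k) :
  eucl_dist p q ^+ 2 = \sum_i (p 0 i - q 0 i) ^+ 2.
Proof. by rewrite sqr_sqrtr // sumr_ge0 // => i _; apply: sqr_ge0. Qed.

Lemma ip_dist_powR_sqr (R : realType) (V : lmodType R) (ip : V -> V -> R) u v a :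
  is_inner_product ip -> ip_dist ip u v `^ a ^+ 2 = ip (u - v) (u - v) `^ a.
Proof.
move=> ip_inner; rewrite expr2 -powRM ?sqrtr_ge0 // -expr2 sqr_sqrtr //.
exact: ipxx_ge0.
Qed.

Theorem theorem1 (R : realType) (V : lmodType R) (ip : V -> V -> R)
  (HV : separable_hilbert ip) (n : nat) (hn : (2 <= n)%N)
  (x : 'I_n -> V) (hx : injective x) (alpha : R)
  (ha0 : 0 < alpha) (ha1 : alpha < 1) :
  ~ exists f : 'I_n -> 'rV[R]_(n - 2),
      forall i j : 'I_n, eucl_dist (f i) (f j) = (ip_dist ip (x i) (x j)) `^ alpha.
Proof.
case=> f f_iso; case: HV => ip_inner _ _.
have [|c [c_nz c_sum c_f]] := @affine_dependence _ _ _ f; first lia.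
pose N i j := ip (x i - x j) (x i - x j).
have N_powR i j : N i j `^ alpha = \sum_k (f i 0 k - f j 0 k) ^+ 2.
  by rewrite -(ip_dist_powR_sqr _ _ _ ip_inner) -f_iso eucl_dist_sqr.
have : quad_form c (fun i j => N i j `^ alpha) = 0.
  under eq_fun do under eq_fun do rewrite N_powR.
  rewrite quad_form_sum big1 // => k _; apply: quad_form_sqr_diff c_sum _.
  have := congr1 (fun v : 'rV_(n - 2) => v 0 k) c_f; rewrite summxE mxE => sum_cf.
  by rewrite -[RHS]sum_cf; apply: eq_bigr => i _; rewrite mxE.
apply/eqP; rewrite lt_eqF // quad_form_powR_lt0 // => [i j|i j ij|i|s s_gt0].
- exact: ipxx_ge0.
- by apply: ipxx_gt0; rewrite // subr_eq0 (inj_eq hx).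
- by rewrite /N subrr ip0l.
- exact/gaussian_psd/ltW.
Qed.
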